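(* Let $n\in\mathbb N$, $\alpha>0$, and let $Q\subset\mathbb R^n$ be a cube with sides parallel to the axes and side length $r=\ell(Q)\le1$; let $2Q$ be the concentric cube of side $2r$. Then there is a constant $C$ depending only on $n$ and $\alpha$ such that for every measurable $g:\mathbb R^n\to[0,\infty)$ and every $x\in Q$, $$\int_{2Q}\frac{g(y)}{|x-y|^{n-\alpha}}\,dy\le C\int_Q\frac{Mg(y)}{|x-y|^{n-\alpha}}\,dy.$$
   Context: $Mg(y)=\sup_{\rho>0}\frac{1}{|B(y,\rho)|}\int_{B(y,\rho)}|g|$ is the Hardy–Littlewood maximal function. *)

From HB Require Import structures.
From mathcomp Require Import all_boot all_order all_algebra.
From mathcomp Require Import all_classical all_reals all_analysis.
Set Implicit Arguments. Unset Strict Implicit. Unset Printing Implicit Defensive.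
Import Order.TTheory GRing.Theory Num.Theory.
Import numFieldNormedType.Exports.
Local Open Scope classical_set_scope.
Local Open Scope ring_scope.

(* Euclidean space R^(n.+1), built as the iterated product
   R * (R * ( ... * R)) with its product sigma-algebra (Borel^(n+1)). *)
Fixpoint Rspace (R : realType) (n : nat) : {d : measure_display & measurableType d} :=
  match n with
  | 0 => @existT measure_display (fun d => measurableType d) _ (measurableTypeR R)
  | n'.+1 => @existT measure_display (fun d => measurableType d) _
               ((measurableTypeR R) * projT2 (Rspace R n'))%type
  end.

Definition Rn (R : realType) (n : nat) := projT2 (Rspace R n).

Fixpoint rn_coord (R : realType) (n : nat) : Rn R n -> nat -> R :=
  match n return Rn R n -> nat -> R with
  | 0 => fun x _ => x
  | n'.+1 => fun x i => match i with
                        | 0 => x.1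
                        | i'.+1 => @rn_coord R n' x.2 i'
                        end
  end.

Fixpoint leb (R : realType) (n : nat) : set (Rn R n) -> \bar R :=
  match n return set (Rn R n) -> \bar R with
  | 0 => (@lebesgue_measure R)
  | n'.+1 => (@lebesgue_measure R \x @leb R n')%E
  end.

Definition eucl_dist (R : realType) (n : nat) (x y : Rn R n) : R :=
  Num.sqrt (\sum_(i < n.+1) (rn_coord x i - rn_coord y i) ^+ 2).

Definition eucl_ball (R : realType) (n : nat) (y : Rn R n) (rho : R) : set (Rn R n) :=
  [set z | eucl_dist y z < rho].

Definition axis_cube (R : realType) (n : nat) (c : Rn R n) (s : R) : set (Rn R n) :=
  [set z | forall i, (i <= n)%N -> `|rn_coord z i - rn_coord c i| <= s / 2].

Definition HLmax (R : realType) (n : nat) (g : Rn R n -> R) (y : Rn R n) : \bar R :=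
  ereal_sup [set (((fine (@leb R n (eucl_ball y rho)))^-1)%:E *
                 \int[@leb R n]_(z in eucl_ball y rho) (`|g z|)%:E)%E
            | rho in [set rho : R | 0 < rho]].

From HB Require Import structures.
From mathcomp Require Import all_boot all_order all_algebra.
From mathcomp Require Import all_classical all_reals all_analysis.
From mathcomp Require Import measurable_realfun ring lra.
Import Order.TTheory GRing.Theory Num.Theory.
Import numFieldNormedType.Exports.
Local Open Scope classical_set_scope.
Local Open Scope ring_scope.

(* Write N = n.+1, K y = |x - y| ^ (alpha - N) and s_k = r / 2 ^ (k + 2).  Up to
   the null set {x}, the cube 2Q is covered by the disjoint sup-norm annuli
   A_k = {y in 2Q | 4 s_k < |y - x|_oo <= 8 s_k}.  Inside Q, on the side of x
   facing the centre of Q, lies a cube S_k of side s_k / 2 whose points are at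
   sup-distance between 3/2 s_k and 2 s_k from x; these cubes are pairwise
   disjoint.  On A_k and on S_k the Euclidean distance to x lies in
   [s_k, 8 N s_k], so K is comparable to s_k ^ (alpha - N) on both, and for
   z in S_k the ball B(z, 11 N s_k) contains A_k, whence
   Mg(z) >= |B(z, 11 N s_k)|^-1 \int_{A_k} g.  Therefore
   \int_{A_k} g K <= C \int_{S_k} Mg K, and summing over k gives the claim. *)
Section product_measure1_sigma_finite.
Context {d1 d2 : measure_display} {T1 : measurableType d1} {T2 : measurableType d2}
  {R : realType}.
Variables (m1 : {sigma_finite_measure set T1 -> \bar R})
          (m2 : {sigma_finite_measure set T2 -> \bar R}).

Lemma product_measure1_sigma_finite : sigma_finite setT (m1 \x m2)%E.
Proof.
have /sigma_finiteP[F [UF ndF Ffin]] := sigma_finiteT m1.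
have /sigma_finiteP[G [UG ndG Gfin]] := sigma_finiteT m2.
exists (fun k => F k `*` G k).
  apply/seteqP; split => // -[x y] _.
  have [i _ Fix] : (\bigcup_k F k) x by rewrite -UF.
  have [j _ Gjy] : (\bigcup_k G k) y by rewrite -UG.
  exists (maxn i j) => //; split.
  - exact: (elimT (subsetPset _ _) (ndF _ _ (leq_maxl i j))) _ Fix.
  - exact: (elimT (subsetPset _ _) (ndG _ _ (leq_maxr i j))) _ Gjy.
move=> k; have [mFk Fk_fin] := Ffin k; have [mGk Gk_fin] := Gfin k.
split; first exact: measurableX.
by rewrite product_measure1E // lte_mul_pinfty // ge0_fin_numE.
Qed.

Definition product_sigma_finite_measure :
    {sigma_finite_measure set (T1 * T2)%type -> \bar R} :=
  HB.pack_for (sigma_finite_measure (T1 * T2)%type R) (m1 \x m2)%E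
    (Measure_isSigmaFinite.Build _ _ _ (m1 \x m2)%E product_measure1_sigma_finite).

End product_measure1_sigma_finite.

(* [leb] packaged as a sigma-finite measure, as required by [product_measure1E]
   and by the measure structure on its next iterate. *)
Fixpoint lebsf (R : realType) (n : nat) : {sigma_finite_measure set (Rn R n) -> \bar R} :=
  match n return {sigma_finite_measure set (Rn R n) -> \bar R} with
  | 0 => @lebesgue_measure R
  | n'.+1 => product_sigma_finite_measure (@lebesgue_measure R) (lebsf R n')
  end.

Lemma lebsfE (R : realType) (n : nat) : @leb R n = lebsf R n.
Proof. by elim: n => //= n ->. Qed.

Section nonneg_integral.
Local Open Scope ereal_scope.
Context {d : measure_display} {T : measurableType d} {R : realType}.
Variable mu : {measure set T -> \bar R}.

(* Unlike [ge0_le_integral], this needs no measurability: it is applied to the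
   maximal function. *)
Lemma ge0_le_integral_nonmeasurable (D : set T) (f1 f2 : T -> \bar R) :
  (forall x, D x -> 0 <= f1 x) -> (forall x, D x -> f1 x <= f2 x) ->
  \int[mu]_(x in D) f1 x <= \int[mu]_(x in D) f2 x.
Proof.
move=> f10 f12.
have f20 x : D x -> 0 <= f2 x by move=> Dx; exact: le_trans (f10 x Dx) (f12 x Dx).
rewrite !ge0_integralE //; apply: le_ereal_sup => _ [h hf1 <-].
exists h => // x; apply: le_trans (hf1 x) _; rewrite /patch.
by case: ifP => // /[1!inE] /f12.
Qed.

Lemma ge0_integral_le_nneseries {D E : set T} {A : nat -> set T} {f : T -> \bar R} :
  measurable E -> (forall k, measurable (A k)) -> trivIset setT A ->
  [disjoint E & \bigcup_k A k] -> mu E = 0 -> D `<=` E `|` \bigcup_k A k ->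
  measurable D -> measurable_fun setT f -> (forall x, 0 <= f x) ->
  \int[mu]_(x in D) f x <= \sum_(k <oo) \int[mu]_(x in A k) f x.
Proof.
move=> mE mA tA disjEA E0 DEA mD mf f0.
have mf' B : measurable_fun B f := measurable_funS measurableT (@subsetT _ B) mf.
have mU : measurable (\bigcup_k A k) by exact: bigcupT_measurable.
apply: le_trans (ge0_subset_integral _ mD (measurableU _ _ mE mU) (mf' _)
  (fun x _ => f0 x) DEA) _.
rewrite ge0_integral_setU // null_set_integral // add0e.
by rewrite ge0_integral_bigcup.
Qed.

Lemma nneseries_le_integral (D : set T) (S : nat -> set T) (a : nat -> \bar R)
    (F : T -> \bar R) :
  measurable D -> (forall k, measurable (S k)) -> (forall k, S k `<=` D) ->
  trivIset setT S -> (forall k, 0 <= a k) -> (forall x, D x -> 0 <= F x) ->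
  (forall k x, S k x -> a k <= F x) ->
  \sum_(k <oo) (a k * mu (S k)) <= \int[mu]_(x in D) F x.
Proof.
move=> mD mS SD tS a0 F0 aF.
pose h k x := a k * (\1_(S k) x)%:E.
have h0 k x : 0 <= h k x by rewrite mule_ge0 // lee_fin.
have mh k : measurable_fun D (h k).
  by apply/measurable_funeM/measurable_EFinP; exact: measurable_indic.
have inth k : \int[mu]_(x in D) h k x = a k * mu (S k).
  rewrite ge0_integralZl //; first by rewrite integral_indic // setIidl.
  by apply/measurable_EFinP; exact: measurable_indic.
have hsum K x : D x -> \sum_(0 <= k < K) h k x <= F x.
  move=> Dx; elim: K => [|K IH]; first by rewrite big_geq // F0.
  rewrite big_nat_recr //=; have [SKx|nSKx] := pselect (S K x); last first.
    by rewrite /h indicE memNset // mule0 adde0.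
  rewrite big_nat_cond big1 ?add0e; first by rewrite /h indicE mem_set // mule1 aF.
  move=> k /andP[/andP[_ kK] _]; rewrite /h indicE memNset ?mule0 // => Skx.
  by move: kK; rewrite (tS k K I I (ex_intro _ x (conj Skx SKx))) ltnn.
apply: lime_le; first by apply: is_cvg_nneseries => k _ _; rewrite mule_ge0.
apply: nearW => K; rewrite -(eq_bigr _ (fun k _ => inth k)) -ge0_integral_sum //.
by apply: ge0_le_integral_nonmeasurable => x Dx; [exact: sume_ge0 | exact: hsum].
Qed.

End nonneg_integral.

Section euclidean_space.
Context {R : realType}.
Implicit Types (n : nat) (p : nat -> R).

(* The closed sup-norm ball of radius [h] around the point with coordinates [p];
   [axis_cube c s] is convertible to [cube n (rn_coord c) (s / 2)]. *)
Definition cube n p (h : R) : set (Rn R n) :=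
  [set z | forall i, (i <= n)%N -> `|rn_coord z i - p i| <= h].

Lemma cube0E p h : cube 0 p h = `[p 0%N - h, p 0%N + h]%classic.
Proof.
apply/seteqP; split => z /=; first by move=> /(_ 0%N isT); rewrite in_itv /= ler_distl.
by rewrite in_itv /= -ler_distl => ? [].
Qed.

Lemma cubeSE n p h :
  cube n.+1 p h = `[p 0%N - h, p 0%N + h]%classic `*` cube n (fun i => p i.+1) h.
Proof.
apply/seteqP; split => z /=.
  move=> zh; split => [|i ?]; last exact: (zh i.+1).
  by rewrite in_itv /= -ler_distl; exact: (zh 0%N).
by rewrite in_itv /= -ler_distl => -[? zh] [|i] // /zh.
Qed.

Lemma measurable_cube n p h : measurable (cube n p h).
Proof.
elim: n p => [|n IH] p; first by rewrite cube0E; exact: measurable_itv.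
by rewrite cubeSE; apply: measurableX; [exact: measurable_itv | exact: IH].
Qed.

Lemma lebesgue_measure_centered_itv (a h : R) : 0 <= h ->
  (lebesgue_measure : {measure set _ -> \bar R}) `[a - h, a + h]%classic = (2 * h)%:E.
Proof.
move=> h0; rewrite /= lebesgue_measure_itv /= lte_fin; case: ifPn => [_|].
  by congr EFin; ring.
by rewrite -leNgt => ?; congr EFin; lra.
Qed.

Lemma lebsf_cube n p h : 0 <= h -> lebsf R n (cube n p h) = ((2 * h) ^+ n.+1)%:E.
Proof.
move=> h0; elim: n p => [|n IH] p.
  by rewrite cube0E; exact: lebesgue_measure_centered_itv.
rewrite cubeSE /= product_measure1E; [|exact: measurable_itv|exact: measurable_cube].
by rewrite IH lebesgue_measure_centered_itv // -EFinM exprS.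
Qed.

Lemma measurable_rn_coord {n} i : measurable_fun setT (fun z : Rn R n => rn_coord z i).
Proof.
elim: n i => [|n IH] [|i] /=; try exact: measurable_id; first exact: measurable_fst.
exact: measurableT_comp (IH i) measurable_snd.
Qed.

Lemma measurable_eucl_dist {n} (x : Rn R n) : measurable_fun setT (eucl_dist x).
Proof.
apply: measurableT_comp; first exact: continuous_measurable_fun (@sqrt_continuous R).
apply: measurable_sum => i; apply/measurable_funX/measurable_funB => //.
exact: measurable_rn_coord.
Qed.

Lemma measurable_eucl_ball {n} (x : Rn R n) rho : measurable (eucl_ball x rho).
Proof.
rewrite (_ : eucl_ball x rho = eucl_dist x @^-1` `]-oo, rho[); last first.
  by apply/seteqP; split => z; rewrite /= in_itv.
by rewrite -[_ @^-1` _]setTI; apply: measurable_eucl_dist => //; exact: measurable_itv.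
Qed.

Lemma coord_le_eucl_dist {n} (x y : Rn R n) {i} : (i <= n)%N ->
  `|rn_coord x i - rn_coord y i| <= eucl_dist x y.
Proof.
move=> ilen; rewrite /eucl_dist -sqrtr_sqr ler_sqrt ?sumr_ge0 // => [|j _]; last first.
  exact: sqr_ge0.
rewrite (bigD1 (Ordinal (ilen : (i < n.+1)%N))) //= lerDl.
by apply: sumr_ge0 => j _; exact: sqr_ge0.
Qed.

Lemma cube_eucl_dist_le {n} {x y : Rn R n} {t : R} : 0 <= t ->
  cube n (rn_coord x) t y -> eucl_dist x y <= n.+1%:R * t.
Proof.
move=> t0 yx; rewrite /eucl_dist -(ger0_norm (mulr_ge0 (ler0n _ n.+1) t0)) -sqrtr_sqr.
rewrite ler_sqrt ?sqr_ge0 //; apply: (@le_trans _ _ (\sum_(i < n.+1) t ^+ 2)).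
  apply: ler_sum => i _; have := yx i (ltn_ord i).
  by rewrite ler_distl => /andP[? ?]; nra.
have N1 : 1 <= n.+1%:R :> R by rewrite ler1n.
rewrite sumr_const card_ord -[_ *+ _]mulr_natl; nra.
Qed.

Lemma eucl_ball_sub_cube {n} (z : Rn R n) rho :
  eucl_ball z rho `<=` cube n (rn_coord z) rho.
Proof.
move=> y zy i ilen; rewrite distrC.
exact/ltW/(le_lt_trans (coord_le_eucl_dist z y ilen)).
Qed.

Lemma cube_sub_eucl_ball {n} (z : Rn R n) rho : 0 < rho ->
  cube n (rn_coord z) (rho / (2 * n.+1%:R)) `<=` eucl_ball z rho.
Proof.
move=> rho0 y zy; have N0 : 0 < n.+1%:R :> R by rewrite ltr0n.
apply: le_lt_trans (cube_eucl_dist_le _ zy) _.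
  by rewrite ltW // divr_gt0 // mulr_gt0.
have -> : n.+1%:R * (rho / (2 * n.+1%:R)) = rho / 2 by field; rewrite gt_eqF.
lra.
Qed.

Lemma lebsf_eucl_ball_le {n} (z : Rn R n) rho : 0 <= rho ->
  (lebsf R n (eucl_ball z rho) <= ((2 * rho) ^+ n.+1)%:E)%E.
Proof.
move=> rho0; rewrite -(lebsf_cube n (rn_coord z) rho rho0).
exact: le_measure (mem_set (measurable_eucl_ball _ _)) (mem_set (measurable_cube _ _ _))
  (@eucl_ball_sub_cube _ _ _).
Qed.

Lemma lebsf_eucl_ball_gt0 {n} (z : Rn R n) rho : 0 < rho ->
  (0 < lebsf R n (eucl_ball z rho))%E.
Proof.
move=> rho0; have N0 : 0 < n.+1%:R :> R by rewrite ltr0n.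
have h0 : 0 < rho / (2 * n.+1%:R) by rewrite divr_gt0 // mulr_gt0.
have cube_gt0 : (0 < lebsf R n (cube n (rn_coord z) (rho / (2 * n.+1%:R))))%E.
  by rewrite lebsf_cube ?ltW // lte_fin exprn_gt0 // mulr_gt0.
exact: lt_le_trans cube_gt0 (le_measure _ (mem_set (measurable_cube _ _ _))
  (mem_set (measurable_eucl_ball z rho)) (cube_sub_eucl_ball z rho rho0)).
Qed.

Lemma HLmax_ge0 {n} (g : Rn R n -> R) z : (0 <= HLmax g z)%E.
Proof.
rewrite /HLmax lebsfE; apply: le_trans (ereal_sup_ubound _); last first.
  by exists 1 => //; exact: ltr01.
apply: mule_ge0; last by apply: integral_ge0 => w _; rewrite lee_fin.
by rewrite lee_fin invr_ge0 fine_ge0 // measure_ge0.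
Qed.

Lemma HLmax_ge_average {n} (g : Rn R n -> R) (z : Rn R n) rho (A : set (Rn R n)) :
  measurable_fun setT g -> 0 < rho -> measurable A -> A `<=` eucl_ball z rho ->
  ((((2 * rho) ^+ n.+1)^-1)%:E * \int[lebsf R n]_(y in A) (`|g y|)%:E <= HLmax g z)%E.
Proof.
move=> mg rho0 mA Aball; have V0 : 0 < (2 * rho) ^+ n.+1 by rewrite exprn_gt0 // mulr_gt0.
have ball_le := lebsf_eucl_ball_le z rho (ltW rho0).
have ball_gt0 := lebsf_eucl_ball_gt0 z rho rho0.
have ball_fin : lebsf R n (eucl_ball z rho) \is a fin_num.
  by rewrite ge0_fin_numE ?measure_ge0 // (le_lt_trans ball_le) ?ltry.
rewrite /HLmax lebsfE; apply: le_trans (ereal_sup_ubound _); last by exists rho.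
apply: lee_pmul.
- by rewrite lee_fin invr_ge0 ltW.
- by apply: integral_ge0 => y _; rewrite lee_fin.
- rewrite lee_fin lef_pV2 ?posrE -?lte_fin ?fineK //.
  by rewrite -lee_fin fineK.
- apply: ge0_subset_integral => //; first exact: measurable_eucl_ball.
  apply/measurable_EFinP/measurableT_comp => //.
  exact: measurable_funS (@subsetT _ _) mg.
Qed.

End euclidean_space.

Lemma nat_pred_switch {P : nat -> Prop} {m : nat} :
  P 0%N -> ~ P m -> exists k, P k /\ ~ P k.+1.
Proof.
move=> P0 nPm; apply: contrapT => noswitch; apply: nPm.
by elim: m => // m IH; apply: contrapT => nPm; apply: noswitch; exists m.
Qed.

Lemma trivIset_nat {T : Type} (F : nat -> set T) :
  (forall i j x, (i < j)%N -> F i x -> ~ F j x) -> trivIset setT F.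
Proof.
move=> disj i j _ _ [x [Fix Fjx]]; case: (ltngtP i j) => [ij|ji|//].
  by case: (disj i j x ij Fix).
by case: (disj j i x ji Fjx).
Qed.

Section real_estimates.
Context {R : realType}.

Lemma powR_between (s t M b : R) : 0 < s -> s <= t -> t <= M * s -> 1 <= M ->
  Num.min 1 (M `^ b) * s `^ b <= t `^ b <= Num.max 1 (M `^ b) * s `^ b.
Proof.
move=> s0 st tM M1; have M0 : 0 <= M := le_trans ler01 M1.
have sb0 : 0 <= s `^ b := powR_ge0 _ _.
have Ms : (M * s) `^ b = M `^ b * s `^ b by rewrite powRM // ltW.
have le_min (u : R) : Num.min 1 u * s `^ b <= s `^ b by rewrite ler_piMl // ge_min lexx.
have le_minM : Num.min 1 (M `^ b) * s `^ b <= M `^ b * s `^ b.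
  by rewrite ler_wpM2r // ge_min lexx orbT.
have ge_max (u : R) : s `^ b <= Num.max 1 u * s `^ b by rewrite ler_peMl // le_max lexx.
have ge_maxM : M `^ b * s `^ b <= Num.max 1 (M `^ b) * s `^ b.
  by rewrite ler_wpM2r // le_max lexx orbT.
have nneg (u : R) : 0 < u -> u \is Num.nneg by move=> u0; rewrite nnegrE ltW.
have t0 : 0 < t := lt_le_trans s0 st.
have Ms0 : 0 < M * s := lt_le_trans t0 tM.
have [b0|b0] := leP 0 b.
  rewrite (le_trans (le_min _) (ge0_ler_powR b0 (nneg _ s0) (nneg _ t0) st)) /=.
  by rewrite (le_trans _ ge_maxM) // -Ms ge0_ler_powR // nneg.
have powRV (u : R) : u `^ b = (u `^ (- b))^-1 by rewrite -powRN opprK.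
have anti (u v : R) : 0 < u -> u <= v -> v `^ b <= u `^ b.
  move=> u0 uv; have v0 := lt_le_trans u0 uv.
  have nb : 0 <= - b by rewrite oppr_ge0 ltW.
  rewrite (powRV u) (powRV v) lef_pV2 ?posrE ?powR_gt0 //.
  by apply: (ge0_ler_powR nb) => //; exact: nneg.
rewrite (le_trans (anti _ _ s0 st) (ge_max _)) andbT.
by rewrite (le_trans le_minM) // -Ms anti.
Qed.

Definition dyadic (s0 : R) (k : nat) := s0 / 2 ^+ k.

Lemma dyadic_gt0 s0 k : 0 < s0 -> 0 < dyadic s0 k.
Proof. by move=> s00; rewrite divr_gt0 // exprn_gt0. Qed.

Lemma dyadicS s0 k : dyadic s0 k.+1 = dyadic s0 k / 2.
Proof. by rewrite /dyadic exprSr invfM mulrA. Qed.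

Lemma dyadic_le s0 k : 0 <= s0 -> dyadic s0 k <= s0.
Proof.
by move=> s00; rewrite ler_pdivrMr ?exprn_gt0 // ler_peMr // exprn_ege1 // ler1n.
Qed.

Lemma dyadic_ltn s0 i j : 0 <= s0 -> (i < j)%N -> 2 * dyadic s0 j <= dyadic s0 i.
Proof.
move=> s00 /subnKC <-; elim: (j - i.+1)%N => [|d IH].
  by rewrite addn0 dyadicS mulrC divfK.
rewrite addnS dyadicS; apply: le_trans IH.
have : 0 <= dyadic s0 (i.+1 + d) by rewrite divr_ge0 // exprn_ge0.
lra.
Qed.

Lemma dyadic_small s0 t : 0 < t -> exists k, dyadic s0 k < t.
Proof.
move=> t0; exists (Num.truncn (s0 / t)); set m := Num.truncn _.
have m_lt : s0 / t < m.+1%:R := truncnS_gt _.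
have m_exp : m.+1%:R <= 2 ^+ m :> R by rewrite -natrX ler_nat ltn_expl.
by rewrite ltr_pdivrMr ?exprn_gt0 // mulrC -ltr_pdivrMr // (lt_le_trans m_lt).
Qed.

End real_estimates.

Definition annulus {R : realType} n (c x : Rn R n) (r : R) k : set (Rn R n) :=
  (axis_cube c (2 * r) `&` cube n (rn_coord x) (8 * dyadic (r / 4) k))
  `\` cube n (rn_coord x) (4 * dyadic (r / 4) k).

Definition toward_center {R : realType} n (c x : Rn R n) i : R :=
  if rn_coord x i <= rn_coord c i then 1 else -1.

Definition inner_cube {R : realType} n (c x : Rn R n) (r : R) k : set (Rn R n) :=
  let s := dyadic (r / 4) k in
  cube n (fun i => rn_coord x i + toward_center n c x i * (7 / 4 * s)) (s / 4).

Section dyadic_decomposition.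
Context {R : realType} {n : nat} {c x : Rn R n} {r : R}.
Hypotheses (r0 : 0 < r) (xQ : axis_cube c r x).

Local Notation N := (n.+1%:R : R).
Local Notation s k := (dyadic (r / 4) k).
Local Notation xcube h := (cube n (rn_coord x) h).
Local Notation annulus := (annulus n c x r).
Local Notation inner_cube := (inner_cube n c x r).

Let s_gt0 k : 0 < s k. Proof. by rewrite dyadic_gt0 // divr_gt0. Qed.

Let s_le k : s k <= r / 4. Proof. by rewrite dyadic_le // divr_ge0 // ltW. Qed.

Let s_ltn {i j} : (i < j)%N -> 2 * s j <= s i.
Proof. by apply: dyadic_ltn; rewrite divr_ge0 // ltW. Qed.

Lemma measurable_annulus k : measurable (annulus k).
Proof.
by apply: measurableD; [apply: measurableI|]; exact: measurable_cube.
Qed.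

Lemma annulus_dist k y : annulus k y -> s k <= eucl_dist x y <= 8 * N * s k.
Proof.
move=> [[_ y8] y4]; have sk0 := s_gt0 k; apply/andP; split.
  rewrite leNgt; apply/negP => xy_lt; apply: y4 => i ilen; rewrite distrC.
  by apply: ltW; apply: le_lt_trans (coord_le_eucl_dist x y ilen) _; lra.
rewrite [8 * N]mulrC -mulrA; apply: (cube_eucl_dist_le _ y8).
by rewrite ltW // mulr_gt0.
Qed.

Lemma annulus_trivIset : trivIset setT annulus.
Proof.
apply: trivIset_nat => i j y ij [_ y4] [[_ y8] _]; apply: y4 => k klen.
by apply: le_trans (y8 k klen) _; have := s_ltn ij; lra.
Qed.

Lemma disjoint_center_annuli : [disjoint xcube 0 & \bigcup_k annulus k].
Proof.
rewrite disj_set2E; apply/eqP; rewrite -subset0 => y [y0 [k _ [_ y4]]].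
apply: y4 => i ilen; apply: le_trans (y0 i ilen) _.
by rewrite mulr_ge0 // ltW.
Qed.

Lemma cube2_sub_annuli : axis_cube c (2 * r) `<=` xcube 0 `|` \bigcup_k annulus k.
Proof.
move=> y Q2y; have [xy0|xy_gt0] := leP (eucl_dist x y) 0.
  left => i ilen; rewrite distrC; exact: le_trans (coord_le_eucl_dist x y ilen) xy0.
right; have N0 : 0 < 8 * N by rewrite mulr_gt0 // ltr0n.
have [m sm] := dyadic_small (r / 4) _ (divr_gt0 xy_gt0 N0).
pose P k := xcube (8 * s k) y.
have P0 : P 0%N.
  move=> i ilen; have := Q2y i ilen; have := xQ i ilen; rewrite /dyadic expr0 divr1.
  rewrite !ler_distl => /andP[? ?] /andP[? ?]; apply/andP; split; lra.
have nPm : ~ P m.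
  move=> Pm; have := cube_eucl_dist_le (ltW (mulr_gt0 _ (s_gt0 m))) Pm.
  by rewrite ltr_pdivlMr // in sm; lra.
have [k [Pk nPk1]] := nat_pred_switch P0 nPm.
exists k => //; split => // y4; apply: nPk1.
by rewrite /P dyadicS (_ : 8 * (_ / 2) = 4 * s k) //; lra.
Qed.

Lemma inner_cube_coord k z i : inner_cube k z -> (i <= n)%N ->
  3 / 2 * s k <= `|rn_coord x i - rn_coord z i| <= 2 * s k.
Proof.
move=> zS ilen; have := zS i ilen; rewrite /= /toward_center ler_distl.
have := s_gt0 k; case: ifP => _ sk0 /andP[lo hi].
  by rewrite ler0_norm; [apply/andP; split|]; lra.
by rewrite ger0_norm; [apply/andP; split|]; lra.
Qed.

Lemma inner_cube_dist k z : inner_cube k z -> s k <= eucl_dist x z <= 8 * N * s k.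
Proof.
move=> zS; have sk0 := s_gt0 k; have N0 : 0 < N by rewrite ltr0n.
have /andP[lo _] := inner_cube_coord k z 0 zS (leq0n n).
apply/andP; split; first by apply: le_trans (coord_le_eucl_dist x z (leq0n n)); lra.
have zx : xcube (2 * s k) z.
  by move=> i ilen; have /andP[_ hi] := inner_cube_coord k z i zS ilen; rewrite distrC.
by apply: le_trans (cube_eucl_dist_le _ zx) _; nra.
Qed.

Lemma inner_cube_sub k : inner_cube k `<=` axis_cube c r.
Proof.
move=> z zS i ilen; have := zS i ilen; have := xQ i ilen.
rewrite /= /toward_center !ler_distl.
have := s_le k; have := s_gt0 k; case: ifPn => [xc|]; last rewrite -ltNge => xc.
  by move=> ? ? /andP[? ?] /andP[? ?]; apply/andP; split; lra.
by move=> ? ? /andP[? ?] /andP[? ?]; apply/andP; split; lra.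
Qed.

Lemma inner_cube_trivIset : trivIset setT inner_cube.
Proof.
apply: trivIset_nat => i j z ij zSi zSj.
have /andP[lo _] := inner_cube_coord i z 0 zSi (leq0n n).
have /andP[_ hi] := inner_cube_coord j z 0 zSj (leq0n n).
by have := s_ltn ij; have := s_gt0 i; lra.
Qed.

Lemma lebsf_inner_cube k : lebsf R n (inner_cube k) = ((s k / 2) ^+ n.+1)%:E.
Proof.
rewrite /inner_cube lebsf_cube; last by rewrite divr_ge0 // ltW.
by congr (EFin (_ ^+ _)); field.
Qed.

Lemma annulus_sub_ball k z :
  inner_cube k z -> annulus k `<=` eucl_ball z (11 * N * s k).
Proof.
move=> zS y [[_ y8] _]; have sk0 := s_gt0 k; have N0 : 0 < N by rewrite ltr0n.
have zy : cube n (rn_coord z) (10 * s k) y.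
  move=> i ilen; have := inner_cube_coord k z i zS ilen; have := y8 i ilen.
  rewrite !ler_distl => /andP[? ?] /andP[_ /andP[? ?]]; apply/andP; split; lra.
rewrite /eucl_ball /=; apply: le_lt_trans (cube_eucl_dist_le _ zy) _; nra.
Qed.

End dyadic_decomposition.

Section potential_estimate.
Context {R : realType} (n : nat) (beta : R).

Local Notation N := (n.+1%:R : R).

(* [8 N] bounds [|x - y| / s_k] on the annulus and on the inner cube, and
   [44 N] is the ratio between the diameter [22 N s_k] of the ball used for the
   maximal function and the side [s_k / 2] of the inner cube. *)
Definition potential_constant : R :=
  Num.max 1 ((8 * N) `^ beta) / Num.min 1 ((8 * N) `^ beta) * (44 * N) ^+ n.+1.

Lemma potential_constant_gt0 : 0 < potential_constant.
Proof.
by rewrite mulr_gt0 ?exprn_gt0 ?mulr_gt0 ?ltr0n // divr_gt0.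
Qed.

Variables (c x : Rn R n) (r : R) (g : Rn R n -> R).
Hypotheses (r0 : 0 < r) (xQ : axis_cube c r x).
Hypotheses (mg : measurable_fun setT g) (g0 : forall y, 0 <= g y).

Local Notation s k := (dyadic (r / 4) k).
Local Notation kernel y := (eucl_dist x y `^ beta).
Local Notation A := (annulus n c x r).
Local Notation S := (inner_cube n c x r).

Definition kernel_lo k := Num.min 1 ((8 * N) `^ beta) * s k `^ beta.

Definition kernel_hi k := Num.max 1 ((8 * N) `^ beta) * s k `^ beta.

Definition inner_bound k : \bar R :=
  ((kernel_lo k / (22 * N * s k) ^+ n.+1)%:E * \int[lebsf R n]_(y in A k) (g y)%:E)%E.

Let s_gt0 k : 0 < s k. Proof. by rewrite dyadic_gt0 // divr_gt0. Qed.

Let N8_ge1 : 1 <= 8 * N.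
Proof. have : 1 <= N by rewrite ler1n. by lra. Qed.

Lemma kernel_annulus_le k y : A k y -> kernel y <= kernel_hi k.
Proof.
move=> /(annulus_dist r0) /andP[lo hi].
by have /andP[] := powR_between _ _ _ beta (s_gt0 k) lo hi N8_ge1.
Qed.

Lemma kernel_inner_ge k z : S k z -> kernel_lo k <= kernel z.
Proof.
move=> /(inner_cube_dist r0) /andP[lo hi].
by have /andP[] := powR_between _ _ _ beta (s_gt0 k) lo hi N8_ge1.
Qed.

Lemma inner_bound_ge0 k : (0 <= inner_bound k)%E.
Proof.
apply: mule_ge0; last by apply: integral_ge0 => y _; rewrite lee_fin.
by rewrite lee_fin divr_ge0 ?exprn_ge0 ?mulr_ge0 ?ler0n ?powR_ge0 ?ltW.
Qed.

Lemma inner_bound_le k z : S k z -> (inner_bound k <= HLmax g z * (kernel z)%:E)%E.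
Proof.
move=> zS; rewrite /inner_bound EFinM -muleA muleC; apply: lee_pmul.
- apply: mule_ge0; last by apply: integral_ge0 => y _; rewrite lee_fin.
  by rewrite lee_fin invr_ge0 exprn_ge0 // mulr_ge0 ?ltW // mulr_ge0.
- by rewrite lee_fin mulr_ge0 ?powR_ge0 // le_min ler01 powR_ge0.
- have rho0 : 0 < 11 * N * s k by rewrite !mulr_gt0 ?ltr0n.
  have := HLmax_ge_average g z _ (A k) mg rho0 (measurable_annulus k)
    (annulus_sub_ball r0 k z zS).
  rewrite (eq_integral (fun y => (g y)%:E)) => [|y _]; last by rewrite ger0_norm.
  by rewrite !mulrA (_ : 2 * 11 = 22 :> R) //; lra.
- by rewrite lee_fin; exact: kernel_inner_ge zS.
Qed.

Lemma annulus_potential_le k :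
  (\int[lebsf R n]_(y in A k) (g y * kernel y)%:E
    <= potential_constant%:E * (inner_bound k * lebsf R n (S k)))%E.
Proof.
have sk0 := s_gt0 k; have N0 : 0 < N by rewrite ltr0n.
have lo0 : Num.min 1 ((8 * N) `^ beta) != 0.
  by rewrite gt_eqF // lt_min ltr01 powR_gt0 // mulr_gt0.
have hi_ge0 : 0 <= kernel_hi k by rewrite mulr_ge0 ?powR_ge0 // le_max ler01.
have scaling : potential_constant * (kernel_lo k / (22 * N * s k) ^+ n.+1)
                * (s k / 2) ^+ n.+1 = kernel_hi k.
  have -> : (s k / 2) ^+ n.+1 = (22 * N * s k) ^+ n.+1 / (44 * N) ^+ n.+1.
    by rewrite -expr_div_n; congr (_ ^+ _); field; rewrite gt_eqF.
  rewrite /potential_constant /kernel_lo /kernel_hi; field.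
  by rewrite lo0 !expf_neq0 // ?gt_eqF // ?mulr_gt0 ?ltr0n.
apply: (@le_trans _ _ (\int[lebsf R n]_(y in A k) ((kernel_hi k)%:E * (g y)%:E))%E).
  apply: ge0_le_integral_nonmeasurable => y Ay.
    by rewrite lee_fin mulr_ge0 ?powR_ge0.
  by rewrite -EFinM lee_fin mulrC ler_wpM2r // kernel_annulus_le.
rewrite (ge0_integralZl_EFin _ (measurable_annulus k)) //; last 2 first.
- by move=> y _; rewrite lee_fin.
- exact/measurable_EFinP/(measurable_funS measurableT (@subsetT _ _) mg).
by rewrite lebsf_inner_cube // /inner_bound muleAC muleA -!EFinM mulrA scaling.
Qed.

Lemma potential_le_maximal :
  (\int[lebsf R n]_(y in axis_cube c (2 * r)) (g y * kernel y)%:E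
   <= potential_constant%:E *
      \int[lebsf R n]_(y in axis_cube c r) (HLmax g y * (kernel y)%:E))%E.
Proof.
have f0 y : (0 <= (g y * kernel y)%:E)%E by rewrite lee_fin mulr_ge0 ?powR_ge0.
have mf : measurable_fun setT (fun y => (g y * kernel y)%:E).
  apply/measurable_EFinP/measurable_funM => //.
  exact: measurableT_comp (measurable_powR _) (measurable_eucl_dist x).
have center_null : lebsf R n (cube n (rn_coord x) 0) = 0%E.
  by rewrite lebsf_cube // mulr0 expr0n.
apply: le_trans (ge0_integral_le_nneseries _ (measurable_cube _ _ _) measurable_annulus
  (annulus_trivIset r0) (disjoint_center_annuli r0) center_null (cube2_sub_annuli r0 xQ)
  (measurable_cube _ _ _) mf f0) _.
apply: le_trans (lee_nneseries _ (fun k _ => annulus_potential_le k)) _.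
  by move=> k _ _; apply: integral_ge0 => y _.
rewrite nneseriesZl; last by move=> k _; rewrite mule_ge0 ?inner_bound_ge0.
apply: lee_wpmul2l; first by rewrite lee_fin ltW // potential_constant_gt0.
apply: nneseries_le_integral.
- exact: measurable_cube.
- by move=> k; exact: measurable_cube.
- exact: inner_cube_sub r0 xQ.
- exact: inner_cube_trivIset r0.
- exact: inner_bound_ge0.
- by move=> y _; rewrite mule_ge0 ?HLmax_ge0 // lee_fin powR_ge0.
- exact: inner_bound_le.
Qed.

End potential_estimate.

Theorem lemma5p1 (R : realType) (n : nat) (alpha : R) (halpha : 0 < alpha) :
  exists C : R,
    forall (c : Rn R n) (r : R), 0 < r -> r <= 1 ->
    forall g : Rn R n -> R, measurable_fun setT g -> (forall y, 0 <= g y) ->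
    forall x : Rn R n, x \in axis_cube c r ->
    (\int[@leb R n]_(y in axis_cube c (2 * r))
        ((g y) * (eucl_dist x y) `^ (alpha - n.+1%:R))%:E
     <= C%:E * \int[@leb R n]_(y in axis_cube c r)
        (HLmax g y * ((eucl_dist x y) `^ (alpha - n.+1%:R))%:E))%E.
Proof.
exists (potential_constant n (alpha - n.+1%:R)) => c r r0 _ g mg g0 x /set_mem xQ.
by rewrite !lebsfE; exact: potential_le_maximal.
Qed.
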